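(* Let $a,c\in\mathbb{N}$ and $b,d\in\mathbb{Z}$ with $a\neq c$. Then there exists a completely multiplicative function $f:\mathbb{N}\to\mathbb{S}^1$ such that $$\liminf_{n\to\infty}|f(an+b)-f(cn+d)|>0.$$
   Context: $\mathbb{N}=\{1,2,\dots\}$, $\mathbb{S}^1$ the unit circle in $\mathbb{C}$; completely multiplicative means $f(mn)=f(m)f(n)$ for all $m,n$. The expression is considered for $n$ large enough that $an+b,cn+d\ge1$. *)

From HB Require Import structures.
From mathcomp Require Import all_boot all_order all_algebra.
From mathcomp Require Import complex.
From mathcomp Require Import all_classical all_reals all_analysis.
Set Implicit Arguments. Unset Strict Implicit. Unset Printing Implicit Defensive.
Import Order.TTheory GRing.Theory Num.Theory.
Local Open Scope ring_scope.

Definition cmod (R : realType) (z : R[i]) : R := ComplexField.Normc.normc z.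

Definition unit_circle_valued (R : realType) (f : nat -> R[i]) : Prop :=
  forall n : nat, (0 < n)%N -> cmod (f n) = 1.

Definition completely_multiplicative (R : realType) (f : nat -> R[i]) : Prop :=
  forall m n : nat, (0 < m)%N -> (0 < n)%N -> f (m * n)%N = f m * f n.

(* the sequence n |-> |f(an+b) - f(cn+d)|; the integer arguments are
   converted to nat by absolute value, which agrees with them once
   an+b, cn+d >= 1 (i.e. for n large), so the liminf is unaffected *)
Definition diff_seq (R : realType) (f : nat -> R[i]) (a c : nat) (b d : int)
  (n : nat) : R :=
  cmod (f (absz (a%:Z * n%:Z + b)) - f (absz (c%:Z * n%:Z + d))).

(* Take f(n) = n^(it) for a real t.  Since ln|an+b| - ln n tends to ln a, the
   value f(an+b) is asymptotically f(n) a^(it), so |f(an+b) - f(cn+d)| tends to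
   |a^(it) - c^(it)| = sqrt(2 - 2 cos(t (ln a - ln c))).  As a <> c, choosing
   t = pi / (ln a - ln c) makes this limit 2. *)
From HB Require Import structures.
From mathcomp Require Import all_boot all_order all_algebra.
From mathcomp Require Import all_classical all_reals all_analysis.
From mathcomp Require Import ring zify.
From mathcomp Require Import complex.
Set Implicit Arguments. Unset Strict Implicit. Unset Printing Implicit Defensive.
Import Order.TTheory GRing.Theory Num.Theory numFieldNormedType.Exports.
Local Open Scope ring_scope.
Local Open Scope classical_set_scope.

Section Cis.
Variable R : realType.

Definition cis (x : R) : R[i] := Complex (cos x) (sin x).

Lemma cmod_cis x : cmod (cis x) = 1.
Proof. by rewrite /cmod /cis /= cos2Dsin2 sqrtr1. Qed.

Lemma cisD x y : cis (x + y) = cis x * cis y.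
Proof. by rewrite /cis cosD sinD [RHS]/GRing.mul /=; congr Complex; exact: addrC. Qed.

Lemma cmod_cisB x y : cmod (cis x - cis y) = Num.sqrt (2 - 2 * cos (x - y)).
Proof.
rewrite /cmod /cis /= cosB; congr Num.sqrt.
move: (cos2Dsin2 x) (cos2Dsin2 y).
move: (cos x) (cos y) (sin x) (sin y) => p q r s hx hy.
transitivity ((p ^+ 2 + r ^+ 2) + (q ^+ 2 + s ^+ 2) - 2 * (p * q + r * s)); first ring.
by rewrite hx hy; ring.
Qed.

(* [npowi t n] is n^(it); at n = 0 it is the junk value cis 0 = 1, as ln 0 = 0. *)
Definition npowi (t : R) (n : nat) : R[i] := cis (t * ln (n%:R : R)).

Lemma npowiM t m n : (0 < m)%N -> (0 < n)%N -> npowi t (m * n) = npowi t m * npowi t n.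
Proof. by move=> m0 n0; rewrite /npowi natrM lnM ?posrE ?ltr0n // mulrDr cisD. Qed.

Lemma cvg_ln_affine_subln (a : nat) (b : int) : (0 < a)%N ->
  (fun n : nat => ln ((absz (a%:Z * n%:Z + b))%:R : R) - ln (n%:R : R)) @ \oo
    --> ln (a%:R : R).
Proof.
(* After the shift, ln|a(n+1)+b| - ln(n+1) = ln(a + b * harmonic n) once n >= |b|. *)
move=> a0; rewrite -cvg_shiftS.
have ha : (0 : R) < a%:R by rewrite ltr0n.
have lim_ratio : (fun n => a%:R + b%:~R * harmonic n) @ \oo --> (a%:R : R).
  rewrite -[X in _ --> X]addr0 -(mulr0 (b%:~R : R)).
  exact: cvgD (cvg_cst _) (cvgM (cvg_cst _) cvg_harmonic).
apply: cvg_trans _ (@continuous_cvg _ _ _ _ _ _ _ _ (continuous_ln ha) lim_ratio).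
apply: near_eq_cvg; exists (absz b) => // n /= hn.
have pos_arg : (0 < a%:Z * n.+1%:Z + b)%R by nia.
have pos_argR : (0 : R) < (a%:Z * n.+1%:Z + b)%:~R by rewrite ltr0z.
rewrite natr_absz gtr0_norm // -ln_div ?posrE ?ltr0n //.
congr ln; rewrite intrD intrM !pmulrn mulrDl -mulrA divff ?mulr1 // pnatr_eq0 //.
Qed.

Lemma cvg_diff_seq_npowi t (a c : nat) (b d : int) : (0 < a)%N -> (0 < c)%N ->
  diff_seq (npowi t) a c b d @ \oo --> cmod (npowi t a - npowi t c).
Proof.
move=> a0 c0.
set u := fun n : nat => ln ((absz (a%:Z * n%:Z + b))%:R : R) - ln (n%:R : R).
set v := fun n : nat => ln ((absz (c%:Z * n%:Z + d))%:R : R) - ln (n%:R : R).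
have lim_phase : (fun n => t * (u n - v n)) @ \oo
    --> t * ln (a%:R : R) - t * ln (c%:R : R).
  rewrite -mulrBr; apply: cvgM (cvg_cst _) (cvgB _ _); exact: cvg_ln_affine_subln.
have lim_radicand : (fun n => 2 - 2 * cos (t * (u n - v n))) @ \oo
    --> (2 - 2 * cos (t * ln (a%:R : R) - t * ln (c%:R : R)) : R).
  apply: cvgB (cvg_cst _) (cvgM (cvg_cst _) _).
  exact: continuous_cvg (@continuous_cos R _) lim_phase.
rewrite /npowi cmod_cisB.
apply: cvg_trans _ (continuous_cvg _ (@sqrt_continuous R _) lim_radicand).
apply: near_eq_cvg; exists 0%N => // n _ /=.
rewrite /diff_seq /npowi cmod_cisB /u /v.
by congr (Num.sqrt (_ - _ * cos _)); ring.
Qed.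

End Cis.

Theorem lemma4p1 (R : realType) (a c : nat) (b d : int) :
  (0 < a)%N -> (0 < c)%N -> a <> c ->
  exists f : nat -> R[i],
    unit_circle_valued f /\ completely_multiplicative f /\
    0 < limn_inf (diff_seq f a c b d).
Proof.
move=> a0 c0 ac.
have ln_ne : ln (a%:R : R) - ln c%:R != 0.
  rewrite subr_eq0; apply/eqP => /ln_inj eq_ac.
  by apply: ac; apply/eqP; rewrite -(eqr_nat R) eq_ac // ?posrE ltr0n.
set t := pi / (ln (a%:R : R) - ln c%:R).
have t_phase : t * (ln (a%:R : R) - ln c%:R) = pi by rewrite /t mulrVK ?unitfE.
exists (npowi t); split; first by move=> n _; exact: cmod_cis.
split; first by move=> m n; exact: npowiM.
rewrite (cvg_limn_inf_sup (@cvg_diff_seq_npowi R t a c b d a0 c0)).1.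
rewrite /npowi cmod_cisB -mulrBr t_phase cospi sqrtr_gt0 mulrN1 opprK.
by rewrite addr_gt0 ?ltr0n.
Qed.
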